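(* Let $k=k(n)$, $m=m(n)$ be positive integers and suppose there is $\xi=\xi(n)\in(0,1/2)$ with $$\exp[-\xi^2 n]=o\big((1-2^{-k})^m\big)\qquad\text{and}\qquad \Big(\frac{1+2\xi}{4}\Big)^k=o(1/m).$$ Let $f=\bigwedge_{i=1}^m C_i$ where $C_1,\dots,C_m$ are independent uniformly random $k$-clauses on $x_1,\dots,x_n$. Then for every fixed $\zeta>0$, $$\Pr\Big(\big|\mu(f)-(1-2^{-k})^m\big|>\zeta(1-2^{-k})^m\Big)\to 0\quad(n\to\infty).$$
   Context: $\mu$ is the uniform probability measure on $\{0,1\}^n$ and $\mu(f)=\mu(\{x: f(x)=1\})$. A uniformly random $k$-clause on $x_1,\dots,x_n$ is obtained by choosing a $k$-subset $K\subseteq[n]$ uniformly at random and a vector $g\in\{0,1\}^K$ uniformly at random; the clause is the Boolean function $C(x)=1$ iff $x_j=g_j$ for some $j\in K$. *)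

From mathcomp Require Import all_boot.
From Stdlib Require Import Reals.

Set Implicit Arguments.
Unset Strict Implicit.
Unset Printing Implicit Defensive.

(* A k-clause on x_1..x_n, encoded as (K, g) with K a subset of 'I_n and
   g : {0,1}^n vanishing outside K; valid clauses (#|K| = k) are in bijection
   with pairs (K k-subset, g in {0,1}^K), so uniform over valid encodings is
   exactly the uniform random k-clause. *)
Definition clause_t (n : nat) := ({set 'I_n} * {ffun 'I_n -> bool})%type.

Definition valid_clause (n k : nat) (c : clause_t n) : bool :=
  (#|c.1| == k) && [forall i, (i \notin c.1) ==> ~~ c.2 i].

Definition eval_clause (n : nat) (c : clause_t n) (x : {ffun 'I_n -> bool}) : bool :=
  [exists j in c.1, x j == c.2 j].

Definition formula_t (n m : nat) := {ffun 'I_m -> clause_t n}.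

Definition valid_formula (n k m : nat) (F : formula_t n m) : bool :=
  [forall i, valid_clause k (F i)].

Definition eval_formula (n m : nat) (F : formula_t n m) (x : {ffun 'I_n -> bool}) : bool :=
  [forall i, eval_clause (F i) x].

Definition mu (n m : nat) (F : formula_t n m) : R :=
  (INR #|[set x | eval_formula F x]| / 2 ^ n)%R.

(* probability of an event when C_1..C_m are independent uniform k-clauses,
   i.e. uniform over valid m-tuples of clause encodings *)
Definition prob (n k m : nat) (E : formula_t n m -> bool) : R :=
  (INR #|[set F : formula_t n m | valid_formula k F && E F]| / INR #|[set F : formula_t n m | valid_formula k F]|)%R.

Definition little_o (a b : nat -> R) : Prop :=
  forall eps : R, (0 < eps)%R -> exists N : nat, forall n : nat, (N <= n)%nat ->
    (Rabs (a n) <= eps * Rabs (b n))%R.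

Definition dev_event (n m : nat) (p zeta : R) (F : formula_t n m) : bool :=
  if Rlt_dec (zeta * p) (Rabs (mu F - p)) then true else false.

Arguments prob : clear implicits.
Arguments dev_event : clear implicits.

From Stdlib Require Import Reals.
From mathcomp Require Import all_boot all_order all_algebra.
From mathcomp Require Import Rstruct ring lra.
Import Order.TTheory GRing.Theory Num.Theory.

Set Implicit Arguments.
Unset Strict Implicit.
Unset Printing Implicit Defensive.

(* Concentration of mu(f) for a random k-CNF f = C_1 /\ ... /\ C_m, by the
   second moment method.  Write p = (1 - 2^-k)^m and S(f) = #{x : f(x) = 1}.

   1. Counting clauses: every assignment x falsifies exactly 'C(n, k) of the
      'C(n, k) 2^k clauses, so E[S] = 2^n p.  Two assignments x, y that agree
      on a coordinates jointly falsify at most 'C(a, k) clauses, hence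
      satisfy a common clause with probability at most
      r = q^2 + ((1 + 2 xi)/4)^k, q = 1 - 2^-k, whenever a <= (1/2 + xi) n.
   2. A Chernoff bound: at most 2^n exp(-xi^2)^n assignments y agree with a
      given x on more than (1/2 + xi) n coordinates.
   3. Hence E[mu^2] <= r^m + p exp(-xi^2 n), and Chebyshev's inequality gives
      P(|mu - p| > zeta p) zeta^2 <= exp(4 ((1 + 2 xi)/4)^k m) - 1
                                     + exp(-xi^2 n) / p.
   4. Under the two little-o hypotheses both terms tend to 0.
   The file follows this order; real-valued statements use the algebraic
   operations of MathComp on the Stdlib reals, and the last lemmas translate
   the hypotheses and conclusion from the Stdlib notation of the statement. *)

Lemma card_set_in_sum (T : finType) (A : {pred T}) (P : pred T) :
  #|[set x in A | P x]| = (\sum_(x in A) P x)%N.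
Proof.
rewrite -sum1_card [RHS]big_mkcond [LHS]big_mkcond /=.
by apply: eq_bigr => x _; rewrite !inE; case: (x \in A); case: (P x).
Qed.

Lemma card_set_sum (T : finType) (P : pred T) :
  #|[set x | P x]| = (\sum_x P x)%N.
Proof.
rewrite -(card_set_in_sum predT); apply: eq_card => x; by rewrite !inE.
Qed.

Lemma card_set_in_split (T : finType) (A : {pred T}) (P : pred T) :
  (#|[set x in A | P x]| + #|[set x in A | ~~ P x]|)%N = #|A|.
Proof.
rewrite !card_set_in_sum -sum1_card -big_split /=.
by apply: eq_bigr => x _; case: (P x).
Qed.

Lemma card_ffun_all (I T : finType) (P : pred T) :
  #|[set F : {ffun I -> T} | [forall i, P (F i)]]| = (#|[set c | P c]| ^ #|I|)%N.
Proof.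
rewrite -card_ffun_on; apply: eq_card => F; rewrite inE.
apply/forallP/ffun_onP => H i; first by rewrite inE; exact: H.
by have := H i; rewrite inE.
Qed.

Section Clauses.
Variables n k : nat.
Local Notation assignment := {ffun 'I_n -> bool}.

Definition clauses : {set clause_t n} := [set c | valid_clause k c].

Definition agree (x y : assignment) : nat := #|[set i | x i == y i]|.

(* Sign vectors supported on K correspond to the subsets of K. *)
Lemma card_supported (K : {set 'I_n}) :
  #|[set g : assignment | [forall i, (i \notin K) ==> ~~ g i]]| = (2 ^ #|K|)%N.
Proof.
rewrite -card_powerset.
pose supp (g : assignment) := [set i | g i].
have supp_inj : injective supp.
  move=> g1 g2 e; apply/ffunP => i.
  by have := congr1 (fun A : {set 'I_n} => i \in A) e; rewrite !inE.
rewrite -(card_imset _ supp_inj); apply: eq_card => A; rewrite [in RHS]inE.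
apply/imsetP/idP => [[g] | sAK].
  rewrite inE => /forallP gK ->; apply/subsetP => i; rewrite inE => gi.
  by move: (gK i); rewrite gi implybF negbK.
exists [ffun i => i \in A]; last by apply/setP => i; rewrite !inE ffunE.
rewrite inE; apply/forallP => i; apply/implyP; rewrite ffunE.
by apply: contra; exact: (subsetP sAK).
Qed.

Lemma card_clauses : #|clauses| = ('C(n, k) * 2 ^ k)%N.
Proof.
have <- : #|[set K : {set 'I_n} | #|K| == k]| = 'C(n, k).
  by rewrite card_draws card_ord.
rewrite [in RHS]card_set_sum big_distrl /= [in LHS]card_set_sum.
rewrite -(pair_big xpredT xpredT (fun K g => valid_clause k (K, g) : nat)) /=.
apply: eq_bigr => K _; rewrite /valid_clause /=.
case: eqP => [<- | _]; last by rewrite mul0n big1.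
by rewrite mul1n -card_supported card_set_sum.
Qed.

Definition falsified_by (K : {set 'I_n}) (x : assignment) : assignment :=
  [ffun j => (j \in K) && ~~ x j].

Lemma falsifiedE (c : clause_t n) (x : assignment) :
  valid_clause k c && ~~ eval_clause c x =
  (#|c.1| == k) && (c.2 == falsified_by c.1 x).
Proof.
case: c => K g; rewrite /valid_clause /eval_clause /=.
apply/idP/idP => [/andP[/andP[-> /forallP gK] xK] | /andP[-> /eqP ->]] /=.
  apply/eqP/ffunP => j; rewrite ffunE.
  case jK: (j \in K) => /=; last by have := gK j; rewrite jK => /negbTE.
  apply/eqP; apply: contraNT xK => ne; apply/existsP; exists j; rewrite jK /=.
  by move: ne; case: (x j); case: (g j).
apply/andP; split.
  by apply/forallP => j; apply/implyP; rewrite ffunE => /negbTE ->.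
by apply/existsP => -[j /andP[jK]]; rewrite ffunE jK /=; case: (x j).
Qed.

Lemma card_falsified (x : assignment) :
  #|[set c in clauses | ~~ eval_clause c x]| = 'C(n, k).
Proof.
have -> : [set c in clauses | ~~ eval_clause c x] =
          (fun K => (K, falsified_by K x)) @: [set K : {set 'I_n} | #|K| == k].
  apply/setP => c; rewrite !inE falsifiedE; apply/idP/imsetP.
    case/andP => cK /eqP cg; exists c.1; first by rewrite inE.
    by case: c cg cK => /= ? ? ->.
  by case=> K; rewrite inE => Kk ->; rewrite /= Kk eqxx.
rewrite card_imset; first by rewrite card_draws card_ord.
by move=> K1 K2 [].
Qed.

(* A clause falsified by both x and y lives on coordinates where x and y
   agree, and is determined by its support. *)
Lemma card_falsified2 (x y : assignment) :
  #|[set c in clauses | ~~ eval_clause c x && ~~ eval_clause c y]|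
    <= 'C(agree x y, k).
Proof.
have falsE c z : valid_clause k c -> ~~ eval_clause c z ->
    #|c.1| = k /\ c.2 = falsified_by c.1 z.
  by move=> vc ez; move: (falsifiedE c z); rewrite vc ez => /esym/andP[/eqP ? /eqP].
rewrite /agree -cards_draws -(card_in_imset (f := fst)); last first.
  move=> c1 c2; rewrite !inE => /and3P[v1 u1 _] /and3P[v2 u2 _] e12.
  have [_ g1] := falsE c1 x v1 u1.
  have [_ g2] := falsE c2 x v2 u2.
  by case: c1 c2 e12 g1 g2 {v1 v2 u1 u2} => K1 g1 [K2 g2] /= -> -> ->.
apply: subset_leq_card; apply/subsetP => K /imsetP[c]; rewrite !inE.
case/and3P => vc ux uy ->; have [ck gx] := falsE c x vc ux.
have [_ gy] := falsE c y vc uy.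
rewrite ck eqxx andbT; apply/subsetP => j jK; rewrite inE.
have := congr1 (fun g : assignment => g j) (etrans (esym gx) gy).
by rewrite /= !ffunE jK /=; case: (x j); case: (y j).
Qed.

Lemma card_satisfied2 (x y : assignment) :
  (#|[set c in clauses | eval_clause c x && eval_clause c y]|
   + #|[set c in clauses | ~~ eval_clause c x]|
   + #|[set c in clauses | ~~ eval_clause c y]|
  = #|clauses| + #|[set c in clauses | ~~ eval_clause c x && ~~ eval_clause c y]|)%N.
Proof.
rewrite -[#|clauses|]sum1_card !card_set_in_sum -!big_split /=.
apply: eq_bigr => c _.
by case: (eval_clause c x); case: (eval_clause c y).
Qed.

End Clauses.

Section Formulas.
Variables n k m : nat.
Local Notation assignment := {ffun 'I_n -> bool}.

Definition formulas : {set formula_t n m} := [set F | valid_formula k F].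

Definition nsat (F : formula_t n m) : nat := #|[set x : assignment | eval_formula F x]|.

Lemma card_formulas : #|formulas| = (#|clauses n k| ^ m)%N.
Proof. by rewrite -[in RHS](card_ord m) -card_ffun_all. Qed.

Lemma count_formulas_all (Q : pred (clause_t n)) :
  (\sum_(F in formulas) [forall i, Q (F i)])%N
    = (#|[set c in clauses n k | Q c]| ^ m)%N.
Proof.
rewrite -card_set_in_sum -[in RHS](card_ord m) -card_ffun_all.
apply: eq_card => F; rewrite !inE /valid_formula.
apply/andP/forallP => [[/forallP vF /forallP QF] i | H].
  by rewrite !inE vF QF.
by split; apply/forallP => i; have := H i; rewrite !inE => /andP[].
Qed.

Lemma sum_nsat :
  (\sum_(F in formulas) nsat F)%N
    = (\sum_(x : assignment) #|[set c in clauses n k | eval_clause c x]| ^ m)%N.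
Proof.
rewrite /nsat; under eq_bigr do rewrite card_set_sum.
by rewrite exchange_big /=; apply: eq_bigr => x _; rewrite -count_formulas_all.
Qed.

Lemma sum_nsat_sq :
  (\sum_(F in formulas) nsat F * nsat F)%N =
  (\sum_(x : assignment) \sum_(y : assignment)
      #|[set c in clauses n k | eval_clause c x && eval_clause c y]| ^ m)%N.
Proof.
rewrite /nsat; under eq_bigr do rewrite card_set_sum big_distrlr /=.
rewrite exchange_big /=; apply: eq_bigr => x _.
rewrite exchange_big /=; apply: eq_bigr => y _.
rewrite -count_formulas_all; apply: eq_bigr => F _.
rewrite mulnb; congr (nat_of_bool _); rewrite /eval_formula.
apply/andP/forallP => [[/forallP Fx /forallP Fy] i | H]; first by rewrite Fx Fy.
by split; apply/forallP => i; case/andP: (H i).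
Qed.

End Formulas.

(* Falling factorials grow like powers: a ^_ j / a ^ j <= n ^_ j / n ^ j
   for a <= n, cross-multiplied. *)
Lemma ffact_ratio_le (a n j : nat) : a <= n -> a ^_ j * n ^ j <= n ^_ j * a ^ j.
Proof.
move=> le_an; elim: j => [|j IH]; first by rewrite !ffactn0 !expn0.
rewrite !ffactnSr !expnS.
have step : (a - j) * n <= (n - j) * a.
  by rewrite !mulnBl [n * a]mulnC leq_sub2l // leq_mul.
have := leq_mul IH step.
by rewrite mulnACA [in X in _ <= X]mulnACA [n * _]mulnC [a * _]mulnC.
Qed.

Lemma binomial_ratio_le (a n j : nat) : a <= n -> 'C(a, j) * n ^ j <= 'C(n, j) * a ^ j.
Proof.
move=> le_an; rewrite -(leq_pmul2r (fact_gt0 j)).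
by rewrite mulnAC bin_ffact [X in _ <= X]mulnAC bin_ffact ffact_ratio_le.
Qed.

Section RealBounds.
#[local] Bind Scope ring_scope with R.
Local Arguments exp x%_ring_scope.
Local Open Scope ring_scope.

Lemma exp_gt0 (x : R) : 0 < exp x.
Proof. exact/RltP/exp_pos. Qed.

Lemma expD (x y : R) : exp (x + y) = exp x * exp y.
Proof. exact: exp_plus. Qed.

Lemma exp_ge1D (x : R) : 1 + x <= exp x.
Proof. exact/RleP/exp_ineq1_le. Qed.

Lemma exp_ge1 (x : R) : 0 <= x -> 1 <= exp x.
Proof. by move=> x0; have := exp_ge1D x; lra. Qed.

Lemma exp_mulrn (x : R) (j : nat) : exp x ^+ j = exp (x *+ j).
Proof.
elim: j => [|j IH]; first by rewrite expr0 mulr0n exp_0.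
by rewrite exprS IH -expD mulrS.
Qed.

(* From 1 - y <= exp (- y): the exponential is at most 1 / (1 - y). *)
Lemma exp_mul1B_le1 (y : R) : y < 1 -> exp y * (1 - y) <= 1.
Proof.
move=> y1; have := exp_ge1D (- y); have := exp_gt0 y.
have -> : 1 = exp y * exp (- y) by rewrite -expD subrr exp_0.
move=> ey e1; rewrite ler_pM2l //; lra.
Qed.

Lemma exp_le1D2 (y : R) : 0 <= y <= 1/2 -> exp y <= 1 + 2 * y.
Proof.
case/andP => y0 y1; have := exp_mul1B_le1 (y := y) ltac:(lra).
have := exp_gt0 y; nra.
Qed.

(* 1/(1 - v)^2 + 1/(1 + v)^2 <= 2 + 8 v^2 on [0, 1/4], cleared of
   denominators; used for the hyperbolic cosine bound below. *)
Lemma inv_sqr_sum_le (v : R) : 0 <= v <= 1/4 ->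
  (1 + v) ^+ 2 + (1 - v) ^+ 2 <= (2 + 8 * v ^+ 2) * ((1 - v) ^+ 2 * (1 + v) ^+ 2).
Proof.
case/andP => v0 v1; rewrite -subr_ge0.
have -> : (2 + 8 * v ^+ 2) * ((1 - v) ^+ 2 * (1 + v) ^+ 2)
          - ((1 + v) ^+ 2 + (1 - v) ^+ 2)
        = 2 * (v * v) * (1 - 7 * (v * v) + 4 * ((v * v) * (v * v))) by ring.
have w0 : 0 <= v * v by nra.
have w1 : v * v <= 1/16 by nra.
have w2 : 0 <= (v * v) * (v * v) by nra.
apply: mulr_ge0; lra.
Qed.

(* cosh s <= exp (s ^ 2) on [0, 1/2]: write exp (+-s) = exp (+-v) ^ 2 with
   v = s/2, bound exp (+-v) by 1 / (1 -+ v), and compare rational functions. *)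
Lemma cosh_le (s : R) : 0 <= s <= 1/2 -> exp s + exp (- s) <= 2 * exp (s ^+ 2).
Proof.
case/andP => s0 s1; set v := s / 2.
have sv : s = v + v by rewrite /v; field.
have v0 : 0 <= v by rewrite /v; lra.
have v1 : v <= 1/4 by rewrite /v; lra.
clearbody v.
have hA : exp s = exp v ^+ 2 by rewrite sv expD expr2.
have hB : exp (- s) = exp (- v) ^+ 2 by rewrite sv opprD expD expr2.
have A1 : exp v * (1 - v) <= 1 by apply: exp_mul1B_le1; lra.
have B1 : exp (- v) * (1 + v) <= 1.
  have nv1 : - v < 1 by lra.
  by have := exp_mul1B_le1 nv1; rewrite opprK.
have A0 := exp_gt0 v; have B0 := exp_gt0 (- v).
have e2 := exp_ge1D (s ^+ 2).
rewrite hA hB; set A := exp v in A1 A0 *; set B := exp (- v) in B1 B0 *.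
have sq_le1 (a b : R) : 0 < a -> 0 <= b -> a * b <= 1 -> a ^+ 2 * b ^+ 2 <= 1.
  move=> a0 b0 ab1; have ab0 : 0 <= a * b by apply: mulr_ge0 => //; exact: ltW.
  by rewrite -exprMn exprn_ile1.
have hA2 := sq_le1 _ _ A0 (ltac:(lra) : 0 <= 1 - v) A1.
have hB2 := sq_le1 _ _ B0 (ltac:(lra) : 0 <= 1 + v) B1.
have pos : 0 < (1 - v) ^+ 2 * (1 + v) ^+ 2.
  by apply: mulr_gt0; apply: exprn_gt0; lra.
have key : (A ^+ 2 + B ^+ 2) * ((1 - v) ^+ 2 * (1 + v) ^+ 2)
           <= (2 + 8 * v ^+ 2) * ((1 - v) ^+ 2 * (1 + v) ^+ 2).
  have v14 : 0 <= v <= 1/4 by apply/andP.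
  apply: le_trans (inv_sqr_sum_le v14); rewrite mulrDl lerD //.
  - by rewrite mulrA -[X in _ <= X]mul1r ler_wpM2r ?sqr_ge0.
  - by rewrite [_ * (1 + v) ^+ 2]mulrC mulrA -[X in _ <= X]mul1r ler_wpM2r ?sqr_ge0.
rewrite ler_pM2r // in key.
have : 8 * v ^+ 2 = 2 * s ^+ 2 by rewrite sv; ring.
lra.
Qed.

(* Generating function of the number of agreements with a fixed x:
   the coordinates contribute independently a factor lam + 1. *)
Lemma sum_pow_agree (S : comNzRingType) (n : nat) (x : {ffun 'I_n -> bool}) (lam : S) :
  \sum_(y : {ffun 'I_n -> bool}) lam ^+ agree x y = (lam + 1) ^+ n.
Proof.
transitivity (\sum_(y : {ffun 'I_n -> bool}) \prod_(i < n) (if x i == y i then lam else 1)).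
  apply: eq_bigr => y _; rewrite /agree -prodr_const big_mkcond /=.
  by apply: eq_bigr => i _; rewrite inE.
rewrite -(bigA_distr_bigA (fun (i : 'I_n) (b : bool) => if x i == b then lam else 1)) /=.
rewrite -[in RHS](card_ord n) -prodr_const; apply: eq_bigr => i _.
by rewrite big_bool /=; case: (x i) => /=; rewrite addrC.
Qed.

Section Chernoff.
Variable n : nat.

(* Chernoff bound: few assignments agree with x on more than (1/2 + xi) n
   coordinates.  Markov's inequality applied to exp (2 xi (agree x y)). *)
Lemma card_large_agree (x : {ffun 'I_n -> bool}) (xi : R) : 0 < xi < 1/2 ->
  \sum_(y : {ffun 'I_n -> bool})
     (if (1/2 + xi) * n%:R < (agree x y)%:R then 1 else 0)
    <= 2 ^+ n * exp (- xi ^+ 2) ^+ n.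
Proof.
case/andP => xi0 xi1.
set t := 2 * xi; set lam := exp t; set c := exp (- (t * (1/2 + xi))).
have markov (y : {ffun 'I_n -> bool}) :
    (if (1/2 + xi) * n%:R < (agree x y)%:R then 1 else 0) <= lam ^+ agree x y * c ^+ n.
  have -> : lam ^+ agree x y * c ^+ n = exp (t * ((agree x y)%:R - (1/2 + xi) * n%:R)).
    rewrite /lam /c !exp_mulrn -expD -[t *+ _]mulr_natr -[(- _) *+ n]mulr_natr.
    by congr exp; ring.
  case: ifP => large; last exact/ltW/exp_gt0.
  by apply: exp_ge1; apply: mulr_ge0; rewrite /t; lra.
have per_coord : (lam + 1) * c <= 2 * exp (- xi ^+ 2).
  have -> : (lam + 1) * c = (exp xi + exp (- xi)) * exp (- (2 * xi ^+ 2)).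
    rewrite mulrDl mul1r /lam /c -!expD mulrDl -!expD.
    by congr (_ + _); apply: congr1; rewrite /t; field.
  have -> : 2 * exp (- xi ^+ 2) = 2 * exp (xi ^+ 2) * exp (- (2 * xi ^+ 2)).
    by rewrite -mulrA -expD; congr (_ * exp _); ring.
  by rewrite ler_wpM2r ?cosh_le ?(ltW (exp_gt0 _)) //; apply/andP; split; lra.
apply: le_trans (ler_sum _ (fun y _ => markov y)) _.
rewrite -mulr_suml sum_pow_agree -!exprMn lerXn2r ?nnegrE //.
- by apply: mulr_ge0; [rewrite /lam; have := exp_gt0 t; lra | exact/ltW/exp_gt0].
- by apply: mulr_ge0; [lra | exact/ltW/exp_gt0].
Qed.

End Chernoff.

Lemma chebyshev_count (T : finType) (A : {set T}) (f : T -> R) (a c : R) : 0 <= c ->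
  (#|[set t in A | c < `|f t - a|]|)%:R * c ^+ 2 <= \sum_(t in A) (f t - a) ^+ 2.
Proof.
move=> c0; rewrite card_set_in_sum natr_sum mulr_suml; apply: ler_sum => t _.
have [lt_c | _] /= := boolP (c < `|f t - a|); last by rewrite mul0r sqr_ge0.
rewrite mul1r -(real_normK (num_real (f t - a))) !expr2.
by apply: ler_pM => //; exact: ltW.
Qed.

Lemma sum_sq_centered (T : finType) (A : {set T}) (f : T -> R) (a : R) :
  \sum_(t in A) (f t - a) ^+ 2 =
  \sum_(t in A) f t ^+ 2 - 2 * a * \sum_(t in A) f t + a ^+ 2 * (#|A|)%:R.
Proof.
rewrite (eq_bigr (fun t => f t ^+ 2 + (- (2 * a) * f t + a ^+ 2))); last by move=> *; ring.
by rewrite !big_split /= -mulr_sumr sumr_const -mulr_natr; ring.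
Qed.

Lemma two_pow_ge2 (k : nat) : (0 < k)%N -> 2 <= (2 : R) ^+ k.
Proof.
case: k => // k _; rewrite exprS.
have : 1 <= (2 : R) ^+ k by apply: exprn_ege1; lra.
lra.
Qed.

Lemma clause_prob_ge (k : nat) : (0 < k)%N -> 1/2 <= 1 - (2 ^+ k)^-1 :> R.
Proof.
move/two_pow_ge2 => h2; have : ((2 : R) ^+ k)^-1 <= 2^-1.
  by rewrite lef_pV2 ?posrE; lra.
lra.
Qed.

Lemma muE (n m : nat) (F : formula_t n m) : mu F = (nsat F)%:R / 2 ^+ n.
Proof. by rewrite /mu INRE RdivE RpowE. Qed.

Lemma dev_eventE (n m : nat) (p zeta : R) (F : formula_t n m) :
  dev_event n m p zeta F = (zeta * p < `|mu F - p|).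
Proof.
by rewrite /dev_event; case: Rlt_dec => h; apply/esym; [apply/RltP | apply/negbTE/RltP].
Qed.

Section SecondMoment.
Variables (n k m : nat) (xi : R).
Hypotheses (k_gt0 : (0 < k)%N) (xi_range : 0 < xi < 1/2) (Ckn_gt0 : (0 < 'C(n, k))%N).
Local Notation assignment := {ffun 'I_n -> bool}.
Local Notation clauses := (clauses n k).

(* q: probability that a random clause is satisfied by a fixed assignment;
   r: bound on the probability that it is satisfied by two fixed assignments
   agreeing on at most (1/2 + xi) n coordinates;
   E: bound on the fraction of pairs agreeing on more coordinates. *)
Let q : R := 1 - (2 ^+ k)^-1.
Let r : R := q ^+ 2 + ((1 + 2 * xi) / 4) ^+ k.
Let E : R := exp (- xi ^+ 2) ^+ n.
Let N : R := (#|clauses|)%:R.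

Let sat1 (x : assignment) := #|[set c in clauses | eval_clause c x]|.
Let sat2 (x y : assignment) := #|[set c in clauses | eval_clause c x && eval_clause c y]|.

Let q_ge : 1/2 <= q. Proof. exact: clause_prob_ge. Qed.
Let q_ge0 : 0 <= q. Proof. by have := q_ge; lra. Qed.
Let r_ge0 : 0 <= r.
Proof.
apply: addr_ge0; first exact: sqr_ge0.
by apply: exprn_ge0; case/andP: xi_range => *; lra.
Qed.
Let two_pow_k_ge2 : 2 <= (2 : R) ^+ k. Proof. exact: two_pow_ge2. Qed.

Let NE : N = ('C(n, k))%:R * 2 ^+ k.
Proof. by rewrite /N card_clauses natrM natrX. Qed.

Lemma sat1E (x : assignment) : (sat1 x)%:R = N * q.
Proof.
have := card_set_in_split clauses (fun c => eval_clause c x).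
rewrite card_falsified => /(congr1 (fun t : nat => t%:R : R)); rewrite natrD -/N => h.
have -> : (sat1 x)%:R = N - ('C(n, k))%:R by rewrite -h addrK.
have hz0 : (2 : R) ^+ k != 0 by apply: lt0r_neq0; have := two_pow_k_ge2; lra.
by rewrite NE /q; field.
Qed.

Lemma sat2_le_sat1 (x y : assignment) : (sat2 x y <= sat1 x)%N.
Proof.
apply: subset_leq_card; apply/subsetP => c; rewrite !inE.
by case/andP => -> /andP[-> _].
Qed.

Let n_gt0 : (0 < n)%N.
Proof. by move: Ckn_gt0; rewrite bin_gt0; exact: leq_trans. Qed.

(* Few falsified clauses in common when x and y agree on few coordinates:
   by inclusion-exclusion sat2 = N - 2 'C(n, k) + #(falsified by both), and
   the last term is at most 'C(agree, k) <= 'C(n, k) (1/2 + xi)^k. *)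
Lemma sat2_typical (x y : assignment) :
  (agree x y)%:R <= (1/2 + xi) * n%:R -> (sat2 x y)%:R <= N * r.
Proof.
move=> le_agree; set a := agree x y in le_agree.
have := card_satisfied2 k x y; rewrite !card_falsified.
have := card_falsified2 k x y; rewrite -/a.
set U := #|[set c in clauses | _]| => U_le.
move/(congr1 (fun t : nat => t%:R : R)); rewrite !natrD -/N => incl_excl.
have le_an : (a <= n)%N by rewrite /a /agree -[X in (_ <= X)%N](card_ord n) max_card.
have n_pos : 0 < (n%:R : R) by rewrite ltr0n n_gt0.
have half_pos : 0 <= 1/2 + xi by case/andP: xi_range => *; lra.
have bin_a : ('C(a, k))%:R <= ('C(n, k))%:R * (1/2 + xi) ^+ k :> R.
  have nk : 0 < (n%:R : R) ^+ k by apply: exprn_gt0.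
  rewrite -(ler_pM2r nk); apply: le_trans (_ : _ <= ('C(n, k) * a ^ k)%:R) _.
    by rewrite -natrX -natrM ler_nat binomial_ratio_le.
  rewrite natrM natrX -mulrA ler_wpM2l ?ler0n // -exprMn lerXn2r ?nnegrE //.
  exact: mulr_ge0 half_pos (ler0n _ _).
have hz := two_pow_k_ge2; have hz0 : (2 : R) ^+ k != 0 by apply: lt0r_neq0; lra.
have rE : N * r = N - 2 * ('C(n, k))%:R + ('C(n, k))%:R * ((2 ^+ k)^-1 + (1/2 + xi) ^+ k).
  have -> : (1/2 + xi) ^+ k = 2 ^+ k * ((1 + 2 * xi) / 4) ^+ k.
    by rewrite -exprMn; congr (_ ^+ _); field.
  by rewrite NE /r /q; field.
have C0 : 0 <= ('C(n, k))%:R * (2 ^+ k)^-1 :> R.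
  by apply: mulr_ge0; rewrite ?ler0n // invr_ge0; lra.
have : (U%:R : R) <= ('C(a, k))%:R by rewrite ler_nat.
rewrite rE mulrDr; lra.
Qed.

Lemma sat2_pow_le (x y : assignment) :
  (sat2 x y)%:R ^+ m <= N ^+ m *
    (r ^+ m + (if (1/2 + xi) * n%:R < (agree x y)%:R then 1 else 0) * q ^+ m).
Proof.
have q_m := exprn_ge0 m q_ge0; have r_m := exprn_ge0 m r_ge0.
case: ifP => [_ | atypical].
  apply: le_trans (_ : _ <= (N * q) ^+ m) _; last first.
    by rewrite exprMn ler_wpM2l ?exprn_ge0 //; lra.
  by rewrite lerXn2r ?nnegrE ?ler0n ?mulr_ge0 // -(sat1E x) ler_nat sat2_le_sat1.
have typical : (agree x y)%:R <= (1/2 + xi) * n%:R by rewrite leNgt atypical.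
apply: le_trans (_ : _ <= (N * r) ^+ m) _; last first.
  by rewrite exprMn ler_wpM2l ?exprn_ge0 //; lra.
by rewrite lerXn2r ?nnegrE ?ler0n ?mulr_ge0 // sat2_typical.
Qed.

Let card_assignments : (#|(xpredT : pred assignment)|)%:R = 2 ^+ n :> R.
Proof. by rewrite (eq_card (B := assignment)) // card_ffun card_bool card_ord natrX. Qed.

(* Summing over y, with the Chernoff bound for the atypical pairs. *)
Lemma sum_sat2_pow_le (x : assignment) :
  \sum_(y : assignment) (sat2 x y)%:R ^+ m <= 2 ^+ n * (N ^+ m * (r ^+ m + q ^+ m * E)).
Proof.
apply: le_trans (ler_sum _ (fun y _ => sat2_pow_le x y)) _.
rewrite -mulr_sumr big_split /= sumr_const -mulr_suml.
rewrite -[r ^+ m *+ _]mulr_natr card_assignments.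
have chernoff := card_large_agree x xi_range.
rewrite mulrCA ler_wpM2l ?exprn_ge0 // mulrDr [2 ^+ n * r ^+ m]mulrC lerD2l.
by rewrite [q ^+ m * E]mulrC mulrA ler_wpM2r ?exprn_ge0.
Qed.

Let formulasR : (#|formulas n k m|)%:R = N ^+ m.
Proof. by rewrite card_formulas natrX. Qed.

Let p : R := q ^+ m.

Lemma sum_mu : \sum_(F in formulas n k m) mu F = N ^+ m * p.
Proof.
under eq_bigr do rewrite muE.
rewrite -mulr_suml -natr_sum sum_nsat natr_sum.
under eq_bigr => x _ do rewrite natrX sat1E exprMn.
rewrite sumr_const -[_ *+ #|_|]mulr_natr card_assignments /p; field.
by apply: lt0r_neq0; apply: exprn_gt0; lra.
Qed.

Lemma sum_mu_sq_le : \sum_(F in formulas n k m) mu F ^+ 2 <= N ^+ m * (r ^+ m + p * E).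
Proof.
have two_n : 0 < (2 : R) ^+ n by apply: exprn_gt0; lra.
have -> : \sum_(F in formulas n k m) mu F ^+ 2
          = (\sum_(F in formulas n k m) nsat F * nsat F)%:R / (2 ^+ n) ^+ 2.
  rewrite natr_sum mulr_suml; apply: eq_bigr => F _.
  by rewrite muE expr_div_n natrM expr2.
rewrite sum_nsat_sq natr_sum ler_pdivrMr ?exprn_gt0 //.
under eq_bigr => x _ do rewrite natr_sum.
under eq_bigr => x _ do under eq_bigr => y _ do rewrite natrX.
apply: le_trans (ler_sum _ (fun x _ => sum_sat2_pow_le x)) _.
rewrite sumr_const -[_ *+ #|_|]mulr_natr card_assignments /p.
by rewrite le_eqVlt; apply/orP; left; apply/eqP; ring.
Qed.

Lemma prob_dev_le (zeta : R) : 0 < zeta ->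
  prob n k m (dev_event n m p zeta) * (zeta * p) ^+ 2 <= r ^+ m + p * E - p ^+ 2.
Proof.
move=> zeta_gt0; have p_ge0 : 0 <= p by apply: exprn_ge0.
have N_gt0 : 0 < N ^+ m.
  by apply: exprn_gt0; rewrite NE mulr_gt0 ?ltr0n //; have := two_pow_k_ge2; lra.
have cheb := chebyshev_count (formulas n k m) (@mu n m) p (mulr_ge0 (ltW zeta_gt0) p_ge0).
rewrite sum_sq_centered sum_mu formulasR in cheb.
have probE : prob n k m (dev_event n m p zeta) =
    (#|[set F in formulas n k m | zeta * p < `|mu F - p|]|)%:R / N ^+ m.
  rewrite /prob !INRE RdivE -formulasR; congr (_%:R / _%:R).
  by apply: eq_card => F; rewrite !inE dev_eventE.
rewrite probE mulrAC ler_pdivrMr //.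
have := sum_mu_sq_le; lra.
Qed.

End SecondMoment.

(* The pair bound r = q^2 + e is at most q^2 exp (4 e) when q >= 1/2. *)
Lemma pair_prob_pow_le (q e : R) (m : nat) : 1/2 <= q -> 0 <= e ->
  (q ^+ 2 + e) ^+ m <= (q ^+ m) ^+ 2 * exp (4 * e * m%:R).
Proof.
move=> q_ge e_ge0.
have le1 : q ^+ 2 + e <= q ^+ 2 * exp (4 * e).
  have := exp_ge1D (4 * e); have : 1/4 <= q ^+ 2 by rewrite expr2; nra.
  nra.
apply: le_trans (_ : _ <= (q ^+ 2 * exp (4 * e)) ^+ m) _.
  apply: lerXn2r le1; rewrite nnegrE; first by apply: addr_ge0 => //; exact: sqr_ge0.
  by apply: mulr_ge0; [exact: sqr_ge0 | exact/ltW/exp_gt0].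
by rewrite exprMn -!exprM mulnC exp_mulrn -[_ *+ m]mulr_natr.
Qed.

Lemma prob_ge0 (n k m : nat) (P : formula_t n m -> bool) : 0 <= prob n k m P.
Proof. by rewrite /prob !INRE RdivE divr_ge0 ?ler0n. Qed.

Lemma deviation_bound (n k m : nat) (xi zeta : R) :
  (0 < k)%N -> (0 < m)%N -> 0 < xi < 1/2 -> 0 < zeta ->
  prob n k m (dev_event n m ((1 - (2 ^+ k)^-1) ^+ m) zeta) * zeta ^+ 2 <=
  exp (4 * ((1 + 2 * xi) / 4) ^+ k * m%:R) - 1
    + exp (- xi ^+ 2) ^+ n / (1 - (2 ^+ k)^-1) ^+ m.
Proof.
move=> k_gt0 m_gt0 xi_range zeta_gt0.
set q := 1 - (2 ^+ k)^-1; set e := ((1 + 2 * xi) / 4) ^+ k.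
set p := q ^+ m; set E := exp (- xi ^+ 2) ^+ n; set X := exp (4 * e * m%:R).
have q_ge : 1/2 <= q := clause_prob_ge k_gt0.
have e_ge0 : 0 <= e by apply: exprn_ge0; case/andP: xi_range => *; lra.
have p_gt0 : 0 < p by apply: exprn_gt0; lra.
have X_ge1 : 1 <= X by apply: exp_ge1; rewrite mulr_ge0 ?ler0n // mulr_ge0 //.
have E_ge0 : 0 <= E by apply: exprn_ge0; exact/ltW/exp_gt0.
have Ep_ge0 : 0 <= E / p by rewrite divr_ge0 // ltW.
have [C0 | C_gt0] := posnP 'C(n, k).
  suff -> : prob n k m (dev_event n m p zeta) = 0 by rewrite mul0r; lra.
  have empty : #|formulas n k m| = 0%N.
    by rewrite card_formulas card_clauses C0 mul0n exp0n.
  by rewrite /prob -[[set F | valid_formula k F]]/(formulas n k m) empty /= RdivE invr0 mulr0.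
have cheb := prob_dev_le m k_gt0 xi_range C_gt0 zeta_gt0.
have r_le := pair_prob_pow_le m q_ge e_ge0.
have pp_gt0 : 0 < p ^+ 2 by apply: exprn_gt0.
rewrite -(ler_pM2r pp_gt0).
have -> : (X - 1 + E / p) * p ^+ 2 = p ^+ 2 * X - p ^+ 2 + p * E.
  by field; apply: lt0r_neq0.
rewrite -/q -/e -/p -/E exprMn mulrA in cheb; rewrite -/p -/X in r_le; lra.
Qed.

Lemma deviation_prob_vanishes (k m : nat -> nat) (xi : nat -> R) (zeta : R) :
  (forall n, (0 < k n)%N) -> (forall n, (0 < m n)%N) ->
  (forall n, 0 < xi n < 1/2) -> 0 < zeta ->
  (forall eps, 0 < eps -> exists N, forall n, (N <= n)%N ->
      exp (- xi n ^+ 2) ^+ n <= eps * (1 - (2 ^+ k n)^-1) ^+ m n) ->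
  (forall eps, 0 < eps -> exists N, forall n, (N <= n)%N ->
      ((1 + 2 * xi n) / 4) ^+ k n * (m n)%:R <= eps) ->
  forall eps, 0 < eps -> exists N, forall n, (N <= n)%N ->
    prob n (k n) (m n) (dev_event n (m n) ((1 - (2 ^+ k n)^-1) ^+ m n) zeta) < eps.
Proof.
move=> k_gt0 m_gt0 xi_range zeta_gt0 small_tail small_pairs eps eps_gt0.
have z2 : 0 < zeta ^+ 2 by apply: exprn_gt0.
set d := Num.min (1/8) (eps * zeta ^+ 2 / 18).
have d_gt0 : 0 < d.
  by rewrite lt_min; apply/andP; split; [lra | apply: divr_gt0 => //; apply: mulr_gt0].
have d_le1 : d <= 1/8 by rewrite ge_min lexx.
have d_le2 : d <= eps * zeta ^+ 2 / 18 by rewrite ge_min lexx orbT.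
have [N1 HN1] := small_tail d d_gt0; have [N2 HN2] := small_pairs d d_gt0.
exists (maxn N1 N2) => n; rewrite geq_max => /andP[/HN1 tail_n /HN2 pairs_n].
have := deviation_bound n (k_gt0 n) (m_gt0 n) (xi_range n) zeta_gt0.
set P := prob _ _ _ _; set q := 1 - (2 ^+ k n)^-1 => bound.
have q_gt0 : 0 < q ^+ m n.
  by apply: exprn_gt0; have := clause_prob_ge (k_gt0 n); rewrite -/q; lra.
have e_ge0 : 0 <= ((1 + 2 * xi n) / 4) ^+ k n * (m n)%:R.
  by rewrite mulr_ge0 ?ler0n // exprn_ge0 //; have := xi_range n; case/andP => *; lra.
have X_le : exp (4 * ((1 + 2 * xi n) / 4) ^+ k n * (m n)%:R) <= 1 + 8 * d.
  rewrite -mulrA; apply: le_trans (exp_le1D2 _) _; first by apply/andP; split; lra.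
  lra.
have E_le : exp (- xi n ^+ 2) ^+ n / q ^+ m n <= d by rewrite ler_pdivrMr.
have : P * zeta ^+ 2 <= eps / 2 * zeta ^+ 2.
  have : eps / 2 * zeta ^+ 2 = 9 * (eps * zeta ^+ 2 / 18) by field.
  lra.
by rewrite ler_pM2r // => P_le; lra.
Qed.

End RealBounds.

Local Open Scope ring_scope.
Open Scope R_scope.

Lemma tail_termE (x : R) (n : nat) :
  exp (- (x ^ 2 * INR n)) = (exp (- x ^+ 2) ^+ n)%R.
Proof. by rewrite exp_mulrn RpowE INRE -[(- _) *+ n]mulr_natr mulNr. Qed.

Lemma clause_termE (k m : nat) :
  (1 - / 2 ^ k) ^ m = ((1 - (2 ^+ k)^-1) ^+ m)%R.
Proof. by rewrite !RpowE. Qed.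

Lemma pair_termE (x : R) (k : nat) :
  ((1 + 2 * x) / 4) ^ k = (((1 + 2 * x) / 4) ^+ k)%R.
Proof. by rewrite RpowE RdivE !IZRposE !INRE. Qed.

Lemma half_rangeE (x : R) : 0 < x < / 2 -> (0 < x < 1/2)%R.
Proof. by case=> /RltP x_gt0 /RltP x_lt; rewrite x_gt0 mul1r. Qed.

Lemma little_o_tail (k m : nat -> nat) (xi : nat -> R) :
  (forall n, (0 < k n)%N) ->
  little_o (fun n => exp (- (xi n ^ 2 * INR n))) (fun n => (1 - / 2 ^ k n) ^ m n) ->
  forall eps, (0 < eps)%R -> exists N, forall n, (N <= n)%N ->
    (exp (- xi n ^+ 2) ^+ n <= eps * (1 - (2 ^+ k n)^-1) ^+ m n)%R.
Proof.
move=> k_gt0 small eps /RltP eps_gt0; have [N HN] := small eps eps_gt0.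
exists N => n /HN /RleP; rewrite !RabsE tail_termE clause_termE.
rewrite ger0_norm; last exact/exprn_ge0/ltW/exp_gt0.
rewrite ger0_norm // exprn_ge0 //; have := clause_prob_ge (k_gt0 n); lra.
Qed.

Lemma little_o_pairs (k m : nat -> nat) (xi : nat -> R) :
  (forall n, (0 < m n)%N) -> (forall n, (0 < xi n < 1/2)%R) ->
  little_o (fun n => ((1 + 2 * xi n) / 4) ^ k n) (fun n => / INR (m n)) ->
  forall eps, (0 < eps)%R -> exists N, forall n, (N <= n)%N ->
    (((1 + 2 * xi n) / 4) ^+ k n * (m n)%:R <= eps)%R.
Proof.
move=> m_gt0 xi_range small eps /RltP eps_gt0; have [N HN] := small eps eps_gt0.
exists N => n /HN /RleP; rewrite !RabsE pair_termE INRE.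
have m_pos : (0 < (m n)%:R :> R)%R by rewrite ltr0n.
rewrite ger0_norm; last by apply: exprn_ge0; have := xi_range n; case/andP => *; lra.
rewrite [`|_^-1|]ger0_norm ?invr_ge0 ?(ltW m_pos) //.
by rewrite ler_pdivlMr.
Qed.

Lemma Un_cv0_of_lt (u : nat -> R) :
  (forall eps, (0 < eps)%R -> exists N, forall n, (N <= n)%N -> (`|u n| < eps)%R) ->
  Un_cv u 0.
Proof.
move=> small eps /RltP eps_gt0; have [N HN] := small eps eps_gt0.
exists N => n /ssrnat.leP /HN; rewrite /R_dist RminusE subr0 RabsE.
by move/RltP.
Qed.

Theorem lemma3p2 (k m : nat -> nat) (xi : nat -> R)
  (hk : forall n, (0 < k n)%nat) (hm : forall n, (0 < m n)%nat)
  (hxi : forall n, 0 < xi n < / 2)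
  (h1 : little_o (fun n => exp (- (xi n ^ 2 * INR n)))
                 (fun n => (1 - / 2 ^ k n) ^ m n))
  (h2 : little_o (fun n => ((1 + 2 * xi n) / 4) ^ k n)
                 (fun n => / INR (m n))) :
  forall zeta : R, 0 < zeta ->
    Un_cv (fun n => prob n (k n) (m n)
                         (dev_event n (m n) ((1 - / 2 ^ k n) ^ m n) zeta)) 0.
Proof.
move=> zeta /RltP zeta_gt0; apply: Un_cv0_of_lt => eps eps_gt0.
have xi_range n := half_rangeE (hxi n).
have [N HN] := deviation_prob_vanishes hk hm xi_range zeta_gt0
  (little_o_tail hk h1) (little_o_pairs hm xi_range h2) eps_gt0.
by exists N => n /HN; rewrite clause_termE ger0_norm // prob_ge0.
Qed.
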